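(* Let $\boldsymbol{S}\in\mathrm{Mat}(M,M,\mathbb{C})$ be invertible, $\boldsymbol{U}\in\mathrm{Mat}(m,M,\mathbb{C})$, $\boldsymbol{V}\in\mathrm{Mat}(M,m,\mathbb{C})$, let $\boldsymbol{K}\in\mathrm{Mat}(M,M,\mathbb{C})$ be invertible with $\boldsymbol{S}\boldsymbol{K}+\boldsymbol{K}\boldsymbol{S}=\boldsymbol{V}\boldsymbol{U}$, and let $p_0\in\mathrm{Mat}(m,m,\mathbb{C})$. Define the reflected data $$\boldsymbol{S}'=-\boldsymbol{S},\quad \boldsymbol{K}'=-\boldsymbol{K}^{-1},\quad \boldsymbol{V}'=\boldsymbol{K}^{-1}\boldsymbol{V},\quad \boldsymbol{U}'=\boldsymbol{U}\boldsymbol{K}^{-1},\quad p_0'=p_0-\boldsymbol{U}\boldsymbol{K}^{-1}\boldsymbol{V}.$$ Then $\boldsymbol{S}'\boldsymbol{K}'+\boldsymbol{K}'\boldsymbol{S}'=\boldsymbol{V}'\boldsymbol{U}'$, and the pair $(q,p)$ built from $(\boldsymbol{S},\boldsymbol{K},\boldsymbol{U},\boldsymbol{V},p_0)$ by the formulas $$q=\boldsymbol{U}\boldsymbol{\Xi}\,(\boldsymbol{I}_M+(\boldsymbol{K}\boldsymbol{\Xi})^2)^{-1}\boldsymbol{V},\qquad p=p_0-\boldsymbol{U}\boldsymbol{\Xi}\boldsymbol{K}\boldsymbol{\Xi}\,(\boldsymbol{I}_M+(\boldsymbol{K}\boldsymbol{\Xi})^2)^{-1}\boldsymbol{V},\qquad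 \boldsymbol{\Xi}=e^{-\boldsymbol{S}x-\boldsymbol{S}^{-1}y},$$ coincides with the pair $(q',p')$ built by the same formulas from $(\boldsymbol{S}',\boldsymbol{K}',\boldsymbol{U}',\boldsymbol{V}',p_0')$ (with $\boldsymbol{\Xi}'=e^{-\boldsymbol{S}'x-\boldsymbol{S}'^{-1}y}$), at all points where the relevant inverses exist.
   Context: $\boldsymbol{I}_M$ is the $M\times M$ identity matrix and $e^{(\cdot)}$ is the matrix exponential; $x,y$ are real variables. *)

(* complex numbers as pairs of Stdlib reals, matrices as
   functions nat -> nat -> C whose dimensions are tracked by the operations
   (products take the inner dimension) and by entrywise equality [meq]. *)
From Stdlib Require Import Reals Arith Factorial.
Open Scope R_scope.

Definition C : Type := (R * R)%type.
Definition RtoC (r : R) : C := (r, 0).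
Definition C0 : C := (0, 0).
Definition C1 : C := (1, 0).
Definition Cadd (a b : C) : C := (fst a + fst b, snd a + snd b).
Definition Copp (a : C) : C := (- fst a, - snd a).
Definition Cmul (a b : C) : C :=
  (fst a * fst b - snd a * snd b, fst a * snd b + snd a * fst b).

Fixpoint Csum (n : nat) (f : nat -> C) : C :=
  match n with
  | O => C0
  | Datatypes.S n' => Cadd (Csum n' f) (f n')
  end.

Definition Mat : Type := nat -> nat -> C.

Definition madd (A B : Mat) : Mat := fun i j => Cadd (A i j) (B i j).
Definition mopp (A : Mat) : Mat := fun i j => Copp (A i j).
Definition msub (A B : Mat) : Mat := madd A (mopp B).
Definition mscal (c : C) (A : Mat) : Mat := fun i j => Cmul c (A i j).
Definition mmul (n : nat) (A B : Mat) : Mat :=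
  fun i j => Csum n (fun k => Cmul (A i k) (B k j)).
Definition mId : Mat := fun i j => if Nat.eqb i j then C1 else C0.

Definition meq (m n : nat) (A B : Mat) : Prop :=
  forall i j, (i < m)%nat -> (j < n)%nat -> A i j = B i j.

Definition is_inv (n : nat) (A B : Mat) : Prop :=
  meq n n (mmul n A B) mId /\ meq n n (mmul n B A) mId.

Fixpoint mpow (n : nat) (A : Mat) (k : nat) : Mat :=
  match k with
  | O => mId
  | Datatypes.S k' => mmul n (mpow n A k') A
  end.

Definition exp_partial (n : nat) (A : Mat) (N : nat) : Mat :=
  fun i j => Csum (Datatypes.S N)
               (fun k => mscal (RtoC (/ INR (fact k))) (mpow n A k) i j).

Definition is_mexp (n : nat) (A E : Mat) : Prop :=
  forall i j, (i < n)%nat -> (j < n)%nat ->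
    Un_cv (fun N => fst (exp_partial n A N i j)) (fst (E i j)) /\
    Un_cv (fun N => snd (exp_partial n A N i j)) (snd (E i j)).

Definition is_Xi (M : nat) (Sm Sinv : Mat) (x y : R) (Xi : Mat) : Prop :=
  is_mexp M (msub (mopp (mscal (RtoC x) Sm)) (mscal (RtoC y) Sinv)) Xi.

Definition is_W (M : nat) (K Xi W : Mat) : Prop :=
  is_inv M (madd mId (mmul M (mmul M K Xi) (mmul M K Xi))) W.

Definition q_of (M : nat) (U V Xi W : Mat) : Mat :=
  mmul M U (mmul M Xi (mmul M W V)).
Definition p_of (M : nat) (p0 K U V Xi W : Mat) : Mat :=
  msub p0 (mmul M U (mmul M Xi (mmul M K (mmul M Xi (mmul M W V))))).

(* Write A = -S x - S^{-1} y, so that Xi = e^A. Since (-S)^{-1} = -S^{-1}, the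
   reflected exponential is Xi' = e^{-A}, and the only analytic fact needed is
   e^A e^{-A} = I. It is proved on the partial sums of the exponential series:
   their product splits into the part with k + l <= N, which collapses to I by
   the binomial theorem applied to (1 - 1)^n, and a tail dominated by
   (sum c^k/k!)^2 - sum (2c)^n/n!, which tends to e^c e^c - e^{2c} = 0.

   Everything else is algebra in the inverses K^{-1} and Y = Xi^{-1}:
   Xi (I + (K Xi)^2)^{-1} and K^{-1} Y (I + (K^{-1} Y)^2)^{-1} K^{-1} are both
   inverses of Y + K Xi K, and Xi K Xi (I + (K Xi)^2)^{-1} and
   (I + (K^{-1} Y)^2)^{-1} K^{-1} are both inverses of K + Y K^{-1} Y. *)

From Pilot Require Import Defs.
From Stdlib Require Import Reals Lra Lia Factorial Setoid Morphisms FunctionalExtensionality.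
Open Scope R_scope.

(** * Double sums of real numbers *)

Lemma sum_f_R0_truncate (g : nat -> R) m d :
  sum_f_R0 (fun l => if (l <=? m)%nat then g l else 0) (m + d) = sum_f_R0 g m.
Proof.
  induction d as [|d IH].
  - rewrite Nat.add_0_r. apply sum_eq. intros i Hi.
    destruct (Nat.leb_spec i m); [reflexivity|lia].
  - rewrite Nat.add_succ_r, tech5, IH.
    destruct (Nat.leb_spec (S (m + d)) m); [lia|lra].
Qed.

Lemma sum_f_R0_antidiagonal (f : nat -> nat -> R) N :
  sum_f_R0 (fun n => sum_f_R0 (fun k => f k (n - k)%nat) n) N =
  sum_f_R0 (fun k => sum_f_R0 (fun l => f k l) (N - k)) N.
Proof.
  induction N as [|N IH]; [reflexivity|].
  rewrite tech5, IH, (tech5 (fun k => sum_f_R0 (fun l => f k l) (S N - k)) N), Nat.sub_diag.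
  replace (sum_f_R0 (fun k => sum_f_R0 (fun l => f k l) (S N - k)) N)
    with (sum_f_R0 (fun k => sum_f_R0 (fun l => f k l) (N - k) + f k (S N - k)%nat) N).
  - rewrite sum_plus, (tech5 (fun k => f k (S N - k)%nat)), Nat.sub_diag. simpl. lra.
  - apply sum_eq. intros i Hi.
    replace (S N - i)%nat with (S (N - i)) by lia. rewrite tech5. reflexivity.
Qed.

Definition square_tail (f : nat -> nat -> R) (N : nat) : R :=
  sum_f_R0 (fun k => sum_f_R0 (fun l => if (k + l <=? N)%nat then 0 else f k l) N) N.

Lemma sum_f_R0_square_split (f : nat -> nat -> R) N :
  sum_f_R0 (fun k => sum_f_R0 (fun l => f k l) N) N =
  sum_f_R0 (fun n => sum_f_R0 (fun k => f k (n - k)%nat) n) N + square_tail f N.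
Proof.
  assert (Hlow : sum_f_R0 (fun k => sum_f_R0 (fun l =>
                     if (k + l <=? N)%nat then f k l else 0) N) N =
                 sum_f_R0 (fun k => sum_f_R0 (fun l => f k l) (N - k)) N).
  { apply sum_eq. intros k Hk.
    transitivity (sum_f_R0 (fun l => if (l <=? N - k)%nat then f k l else 0) (N - k + k)).
    - replace (N - k + k)%nat with N by lia. apply sum_eq. intros l _.
      destruct (Nat.leb_spec (k + l) N), (Nat.leb_spec l (N - k)); try lia; reflexivity.
    - apply sum_f_R0_truncate. }
  rewrite sum_f_R0_antidiagonal, <- Hlow. unfold square_tail.
  rewrite <- sum_plus. apply sum_eq. intros k _. rewrite <- sum_plus.
  apply sum_eq. intros l _. destruct (k + l <=? N)%nat; lra.
Qed.

Lemma square_tail_abs_le (f g : nat -> nat -> R) N :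
  (forall k l, Rabs (f k l) <= g k l) -> Rabs (square_tail f N) <= square_tail g N.
Proof.
  intros H. unfold square_tail.
  eapply Rle_trans; [apply sum_f_R0_triangle|]. apply sum_Rle. intros k _.
  eapply Rle_trans; [apply sum_f_R0_triangle|]. apply sum_Rle. intros l _.
  destruct (k + l <=? N)%nat; [rewrite Rabs_R0; lra | apply H].
Qed.

Lemma sum_f_R0_exp_binomial x y (h : nat -> R) N :
  sum_f_R0 (fun n => sum_f_R0 (fun k =>
      x ^ k / INR (fact k) * (y ^ (n - k) / INR (fact (n - k))) * h n) n) N
  = sum_f_R0 (fun n => h n * (x + y) ^ n / INR (fact n)) N.
Proof.
  apply sum_eq. intros n _. rewrite binomial.
  unfold Rdiv. rewrite Rmult_assoc, (Rmult_comm _ (/ _)), <- Rmult_assoc, scal_sum.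
  apply sum_eq. intros k Hk. unfold Binomial.C.
  pose proof (INR_fact_neq_0 k). pose proof (INR_fact_neq_0 (n - k)).
  pose proof (INR_fact_neq_0 n).
  field. auto.
Qed.

Lemma exp_series_cv x : Un_cv (fun N => sum_f_R0 (fun i => / INR (fact i) * x ^ i) N) (exp x).
Proof. unfold exp. destruct (exist_exp x) as [l Hl]. exact Hl. Qed.

Lemma Un_cv_dominated (u v : nat -> R) l :
  (forall N, Rabs (u N - l) <= v N) -> Un_cv v 0 -> Un_cv u l.
Proof.
  intros H Hv eps He. destruct (Hv eps He) as [N HN]. exists N. intros n Hn.
  specialize (HN n Hn). unfold Rdist in *. rewrite Rminus_0_r in HN.
  specialize (H n). pose proof (Rle_abs (v n)). lra.
Qed.

(* The coefficient of A^k (-A)^l in e^A e^{-A}. *)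
Definition exp_alt_weight (k l : nat) : R := / INR (fact k) * ((-1) ^ l * / INR (fact l)).

Definition exp_weight (c : R) (k l : nat) : R := c ^ k / INR (fact k) * (c ^ l / INR (fact l)).

Lemma antidiagonal_exp_alt_weight (h : nat -> R) N :
  sum_f_R0 (fun n => sum_f_R0 (fun k => exp_alt_weight k (n - k) * h n) n) N = h 0%nat.
Proof.
  transitivity (sum_f_R0 (fun n => h n * (1 + -1) ^ n / INR (fact n)) N).
  - rewrite <- sum_f_R0_exp_binomial. apply sum_eq. intros n _. apply sum_eq. intros k _.
    unfold exp_alt_weight. rewrite pow1. unfold Rdiv. ring.
  - induction N as [|N IH]; [simpl; field|].
    rewrite tech5, IH. replace (1 + -1) with 0 by ring. simpl. lra.
Qed.

Lemma exp_square_tail_cv c : Un_cv (square_tail (exp_weight c)) 0.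
Proof.
  set (Sx := fun x N => sum_f_R0 (fun i => / INR (fact i) * x ^ i) N).
  apply Un_cv_ext with (fun N => Sx c N * Sx c N - Sx (c + c) N).
  - intro N.
    assert (Hsq : Sx c N * Sx c N = sum_f_R0 (fun k => sum_f_R0 (fun l => exp_weight c k l) N) N).
    { unfold Sx. rewrite scal_sum. apply sum_eq. intros k _.
      rewrite scal_sum. apply sum_eq. intros l _. unfold exp_weight, Rdiv. ring. }
    assert (Hdiag : Sx (c + c) N =
                    sum_f_R0 (fun n => sum_f_R0 (fun k => exp_weight c k (n - k)%nat) n) N).
    { unfold Sx. transitivity (sum_f_R0 (fun n => (fun _ => 1) n * (c + c) ^ n / INR (fact n)) N).
      - apply sum_eq. intros n _. unfold Rdiv. ring.
      - rewrite <- sum_f_R0_exp_binomial. apply sum_eq. intros n _. apply sum_eq. intros k _.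
        unfold exp_weight. ring. }
    rewrite Hsq, Hdiag, sum_f_R0_square_split. ring.
  - replace 0 with (exp c * exp c - exp (c + c)) by (rewrite exp_plus; ring).
    apply CV_minus; [apply CV_mult|]; apply exp_series_cv.
Qed.

Lemma exp_cauchy_alternating_cv (h : nat -> R) c :
  (forall n, Rabs (h n) <= c ^ n) ->
  Un_cv (fun N => sum_f_R0 (fun k => sum_f_R0 (fun l =>
           exp_alt_weight k l * h (k + l)%nat) N) N) (h 0%nat).
Proof.
  intros Hh. apply Un_cv_dominated with (square_tail (exp_weight c)); [|apply exp_square_tail_cv].
  intro N.
  rewrite (sum_f_R0_square_split (fun k l => exp_alt_weight k l * h (k + l)%nat)).
  assert (Hdiag : sum_f_R0 (fun n => sum_f_R0 (fun k =>
             exp_alt_weight k (n - k) * h (k + (n - k))%nat) n) N = h 0%nat).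
  { rewrite <- (antidiagonal_exp_alt_weight h N).
    apply sum_eq. intros n _. apply sum_eq. intros k Hk. do 3 f_equal. lia. }
  rewrite Hdiag.
  replace (_ + _ - _) with (square_tail (fun k l => exp_alt_weight k l * h (k + l)%nat) N)
    by ring.
  apply square_tail_abs_le. intros k l.
  pose proof (INR_fact_lt_0 k). pose proof (INR_fact_lt_0 l).
  unfold exp_alt_weight, exp_weight.
  rewrite !Rabs_mult, pow_1_abs, !Rabs_inv, !Rabs_right by lra.
  replace (c ^ k / INR (fact k) * (c ^ l / INR (fact l)))
    with (/ INR (fact k) * (1 * / INR (fact l)) * c ^ (k + l)) by (rewrite pow_add; unfold Rdiv; ring).
  apply Rmult_le_compat_l; [|apply Hh].
  assert (0 < / INR (fact k)) by (apply Rinv_0_lt_compat; lra).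
  assert (0 < / INR (fact l)) by (apply Rinv_0_lt_compat; lra). nra.
Qed.

(** * Complex numbers and matrices *)

Local Notation Cplx := Pilot.Defs.C.

Definition Csub (a b : Cplx) : Cplx := Cadd a (Copp b).

Lemma Cring : ring_theory Pilot.Defs.C0 Pilot.Defs.C1 Cadd Cmul Csub Copp (@eq Cplx).
Proof.
  constructor; intros; repeat match goal with a : Cplx |- _ => destruct a end;
  unfold Csub, Cadd, Cmul, Copp, Pilot.Defs.C0, Pilot.Defs.C1; simpl; f_equal; ring.
Qed.
Add Ring Cring : Cring.

Ltac Cexpand := repeat match goal with a : Cplx |- _ => destruct a end;
  unfold Cmul, Cadd, Copp, RtoC, Pilot.Defs.C0, Pilot.Defs.C1; simpl; f_equal; ring.

Lemma Csum_ext n f g : (forall k, (k < n)%nat -> f k = g k) -> Csum n f = Csum n g.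
Proof.
  induction n; intros H; simpl; [reflexivity|].
  rewrite IHn by (intros; apply H; lia). rewrite H by lia. reflexivity.
Qed.

Lemma Csum_add n f g : Csum n (fun k => Cadd (f k) (g k)) = Cadd (Csum n f) (Csum n g).
Proof. induction n; simpl; [ring|]. rewrite IHn. ring. Qed.

Lemma Csum_mul_l n z f : Csum n (fun k => Cmul z (f k)) = Cmul z (Csum n f).
Proof. induction n; simpl; [ring|]. rewrite IHn. ring. Qed.

Lemma Csum_mul_r n z f : Csum n (fun k => Cmul (f k) z) = Cmul (Csum n f) z.
Proof. induction n; simpl; [ring|]. rewrite IHn. ring. Qed.

Lemma Csum_opp n f : Csum n (fun k => Copp (f k)) = Copp (Csum n f).
Proof. induction n; simpl; [ring|]. rewrite IHn. ring. Qed.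

Lemma Csum_swap n m f :
  Csum n (fun a => Csum m (fun b => f a b)) = Csum m (fun b => Csum n (fun a => f a b)).
Proof.
  revert m; induction n; intros m; simpl.
  - induction m; simpl; [reflexivity|]. rewrite <- IHm. ring.
  - rewrite IHn, <- Csum_add. reflexivity.
Qed.

Lemma Csum_mul n m f g :
  Cmul (Csum n f) (Csum m g) = Csum n (fun k => Csum m (fun l => Cmul (f k) (g l))).
Proof.
  rewrite <- Csum_mul_r. apply Csum_ext. intros k _. rewrite <- Csum_mul_l. reflexivity.
Qed.

Lemma Csum_zero n : Csum n (fun _ => Pilot.Defs.C0) = Pilot.Defs.C0.
Proof. induction n; simpl; [reflexivity|]. rewrite IHn. ring. Qed.

Lemma Csum_delta_l n i g : (i < n)%nat -> Csum n (fun k => Cmul (mId i k) (g k)) = g i.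
Proof.
  induction n; intros H; [lia|]. simpl. unfold mId at 2.
  destruct (Nat.eqb_spec i n).
  - subst. rewrite (Csum_ext _ _ (fun _ => Pilot.Defs.C0)), Csum_zero; [ring|].
    intros k Hk. unfold mId. destruct (Nat.eqb_spec n k); [lia|]. ring.
  - rewrite IHn by lia. ring.
Qed.

Lemma Csum_delta_r n j g : (j < n)%nat -> Csum n (fun k => Cmul (g k) (mId k j)) = g j.
Proof.
  intros H. rewrite <- (Csum_delta_l n j g H). apply Csum_ext. intros k _.
  unfold mId. destruct (Nat.eqb_spec j k), (Nat.eqb_spec k j); try lia; subst; ring.
Qed.

Lemma mmul_assoc n p A B D : mmul n (mmul p A B) D = mmul p A (mmul n B D).
Proof.
  extensionality i; extensionality j. unfold mmul.
  rewrite (Csum_ext n _ (fun k => Csum p (fun l => Cmul (A i l) (Cmul (B l k) (D k j))))).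
  - rewrite Csum_swap. apply Csum_ext. intros l _. rewrite <- Csum_mul_l. reflexivity.
  - intros k _. rewrite <- Csum_mul_r. apply Csum_ext. intros l _. ring.
Qed.

Lemma mmul_addr n A B D : mmul n A (madd B D) = madd (mmul n A B) (mmul n A D).
Proof.
  extensionality i; extensionality j. unfold mmul, madd.
  rewrite <- Csum_add. apply Csum_ext. intros; ring.
Qed.

Lemma mmul_addl n A B D : mmul n (madd A B) D = madd (mmul n A D) (mmul n B D).
Proof.
  extensionality i; extensionality j. unfold mmul, madd.
  rewrite <- Csum_add. apply Csum_ext. intros; ring.
Qed.

Lemma mmul_oppr n A B : mmul n A (mopp B) = mopp (mmul n A B).
Proof.
  extensionality i; extensionality j. unfold mmul, mopp.
  rewrite <- Csum_opp. apply Csum_ext. intros; ring.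
Qed.

Lemma mmul_oppl n A B : mmul n (mopp A) B = mopp (mmul n A B).
Proof.
  extensionality i; extensionality j. unfold mmul, mopp.
  rewrite <- Csum_opp. apply Csum_ext. intros; ring.
Qed.

Lemma mmul_subr n A B D : mmul n A (msub B D) = msub (mmul n A B) (mmul n A D).
Proof. unfold msub. rewrite mmul_addr, mmul_oppr. reflexivity. Qed.

Lemma mopp_opp A : mopp (mopp A) = A.
Proof. extensionality i; extensionality j. unfold mopp. ring. Qed.

Lemma madd_comm A B : madd A B = madd B A.
Proof. extensionality i; extensionality j. unfold madd. ring. Qed.

Global Instance meq_equiv a b : Equivalence (meq a b).
Proof.
  split.
  - intros A i j _ _. reflexivity.
  - intros A B H i j Hi Hj. symmetry. auto.
  - intros A B D H1 H2 i j Hi Hj. rewrite H1 by auto. auto.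
Qed.

Global Instance mmul_proper a n b : Proper (meq a n ==> meq n b ==> meq a b) (mmul n).
Proof.
  intros A A' HA B B' HB i j Hi Hj. unfold mmul.
  apply Csum_ext. intros k Hk. rewrite HA, HB by auto. reflexivity.
Qed.

Global Instance madd_proper a b : Proper (meq a b ==> meq a b ==> meq a b) madd.
Proof. intros A A' HA B B' HB i j Hi Hj. unfold madd. rewrite HA, HB by auto. reflexivity. Qed.

Global Instance mopp_proper a b : Proper (meq a b ==> meq a b) mopp.
Proof. intros A A' HA i j Hi Hj. unfold mopp. rewrite HA by auto. reflexivity. Qed.

Global Instance msub_proper a b : Proper (meq a b ==> meq a b ==> meq a b) msub.
Proof. intros A A' HA B B' HB. unfold msub. rewrite HA, HB. reflexivity. Qed.

Global Instance mscal_proper a b c : Proper (meq a b ==> meq a b) (mscal c).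
Proof. intros A A' HA i j Hi Hj. unfold mscal. rewrite HA by auto. reflexivity. Qed.

Lemma mmul_idl n b A : meq n b (mmul n mId A) A.
Proof. intros i j Hi Hj. apply (Csum_delta_l n i (fun k => A k j)). auto. Qed.

Lemma mmul_idr a n A : meq a n (mmul n A mId) A.
Proof. intros i j Hi Hj. apply (Csum_delta_r n j (fun k => A i k)). auto. Qed.

Lemma mmul_inv_cancel_l n b X Y Z : meq n n (mmul n X Y) mId -> meq n b (mmul n X (mmul n Y Z)) Z.
Proof. intros H. rewrite <- mmul_assoc, H. apply mmul_idl. Qed.

Lemma mmul_inv_cancel_r a n X Y Z : meq n n (mmul n X Y) mId -> meq a n (mmul n Z (mmul n X Y)) Z.
Proof. intros H. rewrite H. apply mmul_idr. Qed.

(** * The matrix exponential *)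

Lemma mpow_opp n A l : mpow n (mopp A) l = mscal (RtoC ((-1) ^ l)) (mpow n A l).
Proof.
  induction l as [|l IH]; extensionality i; extensionality j.
  - unfold mscal. simpl. destruct (mId i j). Cexpand.
  - simpl. rewrite IH. unfold mmul, mscal, mopp.
    rewrite <- Csum_mul_l. apply Csum_ext. intros k _. Cexpand.
Qed.

Lemma mpow_add n A k l i j : (j < n)%nat ->
  mmul n (mpow n A k) (mpow n A l) i j = mpow n A (k + l) i j.
Proof.
  revert i j; induction l as [|l IH]; intros i j Hj.
  - rewrite Nat.add_0_r. apply (mmul_idr (S i) n (mpow n A k)); lia.
  - rewrite Nat.add_succ_r. simpl mpow. rewrite <- mmul_assoc.
    unfold mmul at 1 3. apply Csum_ext. intros p Hp. rewrite IH by auto. reflexivity.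
Qed.

Definition nrm (z : Cplx) : R := Rabs (fst z) + Rabs (snd z).

Lemma nrm_pos z : 0 <= nrm z.
Proof. unfold nrm. pose proof (Rabs_pos (fst z)). pose proof (Rabs_pos (snd z)). lra. Qed.

Lemma nrm_add z w : nrm (Cadd z w) <= nrm z + nrm w.
Proof.
  destruct z as [a b], w as [c d]. unfold nrm, Cadd; simpl.
  pose proof (Rabs_triang a c). pose proof (Rabs_triang b d). lra.
Qed.

Lemma nrm_mul z w : nrm (Cmul z w) <= nrm z * nrm w.
Proof.
  destruct z as [a b], w as [c d]. unfold nrm, Cmul; simpl.
  assert (Rabs (a * c - b * d) <= Rabs a * Rabs c + Rabs b * Rabs d).
  { unfold Rminus. eapply Rle_trans; [apply Rabs_triang|]. rewrite Rabs_Ropp, !Rabs_mult. lra. }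
  assert (Rabs (a * d + b * c) <= Rabs a * Rabs d + Rabs b * Rabs c).
  { eapply Rle_trans; [apply Rabs_triang|]. rewrite !Rabs_mult. lra. }
  nra.
Qed.

Lemma nrm_Csum n f c : (forall k, (k < n)%nat -> nrm (f k) <= c) -> nrm (Csum n f) <= INR n * c.
Proof.
  induction n; intros H.
  - unfold nrm, Pilot.Defs.C0; simpl. rewrite Rabs_R0. lra.
  - simpl Csum. eapply Rle_trans; [apply nrm_add|]. rewrite S_INR.
    assert (nrm (Csum n f) <= INR n * c) by (apply IHn; intros; apply H; lia).
    assert (nrm (f n) <= c) by (apply H; lia). lra.
Qed.

Lemma term_le_sum_f_R0 (f : nat -> R) N i :
  (forall k, 0 <= f k) -> (i <= N)%nat -> f i <= sum_f_R0 f N.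
Proof.
  intros Hf; induction N; intros Hi.
  - replace i with 0%nat by lia. simpl. lra.
  - rewrite tech5. destruct (Nat.eq_dec i (S N)).
    + subst. pose proof (cond_pos_sum f N Hf). lra.
    + pose proof (Hf (S N)). assert (f i <= sum_f_R0 f N) by (apply IHN; lia). lra.
Qed.

Lemma mat_bound n A : exists b, forall i j, (i < n)%nat -> (j < n)%nat -> nrm (A i j) <= b.
Proof.
  exists (sum_f_R0 (fun i => sum_f_R0 (fun j => nrm (A i j)) n) n).
  intros i j Hi Hj. eapply Rle_trans.
  2:{ apply (term_le_sum_f_R0 (fun i => sum_f_R0 (fun j => nrm (A i j)) n) n i); [|lia].
      intro k. apply cond_pos_sum. intro. apply nrm_pos. }
  apply (term_le_sum_f_R0 (fun j => nrm (A i j))); [intro; apply nrm_pos | lia].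
Qed.

Lemma mpow_geometric_bound n A :
  exists c, forall k i j, (j < n)%nat -> nrm (mpow n A k i j) <= c ^ k.
Proof.
  destruct (mat_bound n A) as [b HA]. exists (INR n * b).
  induction k as [|k IH]; intros i j Hj.
  - simpl. unfold mId. destruct (i =? j)%nat; unfold nrm, Pilot.Defs.C1, Pilot.Defs.C0; simpl;
      rewrite ?Rabs_R0, ?Rabs_R1; lra.
  - simpl mpow. unfold mmul. simpl pow.
    replace (INR n * b * (INR n * b) ^ k) with (INR n * ((INR n * b) ^ k * b)) by ring.
    apply nrm_Csum. intros l Hl. eapply Rle_trans; [apply nrm_mul|].
    apply Rmult_le_compat; try apply nrm_pos; auto.
Qed.

Definition Ccv (F : nat -> Cplx) (L : Cplx) : Prop :=
  Un_cv (fun N => fst (F N)) (fst L) /\ Un_cv (fun N => snd (F N)) (snd L).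

Lemma Ccv_ext F G L : (forall N, F N = G N) -> Ccv F L -> Ccv G L.
Proof.
  intros H [H1 H2]. split; eapply Un_cv_ext; eauto; intro N; simpl; rewrite H; reflexivity.
Qed.

Lemma Ccv_unique F a b : Ccv F a -> Ccv F b -> a = b.
Proof.
  intros [Ha1 Ha2] [Hb1 Hb2].
  rewrite (surjective_pairing a), (surjective_pairing b).
  f_equal; eapply UL_sequence; eauto.
Qed.

Lemma Ccv_mul F G a b : Ccv F a -> Ccv G b -> Ccv (fun N => Cmul (F N) (G N)) (Cmul a b).
Proof.
  intros [H1 H2] [H3 H4]. unfold Cmul. split; simpl.
  - apply CV_minus; apply CV_mult; auto.
  - apply CV_plus; apply CV_mult; auto.
Qed.

Lemma Ccv_Csum n (F : nat -> nat -> Cplx) (L : nat -> Cplx) :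
  (forall k, (k < n)%nat -> Ccv (fun N => F N k) (L k)) ->
  Ccv (fun N => Csum n (F N)) (Csum n L).
Proof.
  induction n; intros H.
  - split; intros eps He; exists 0%nat; intros; unfold Rdist; simpl;
      rewrite Rminus_diag, Rabs_R0; lra.
  - destruct IHn as [I1 I2]; [intros; apply H; lia|].
    destruct (H n ltac:(lia)) as [J1 J2].
    split; simpl; apply CV_plus; auto.
Qed.

Lemma fst_Csum N f : fst (Csum (S N) f) = sum_f_R0 (fun k => fst (f k)) N.
Proof.
  induction N; [simpl; ring|].
  change (Csum (S (S N)) f) with (Cadd (Csum (S N) f) (f (S N))).
  rewrite tech5, <- IHN. reflexivity.
Qed.

Lemma snd_Csum N f : snd (Csum (S N) f) = sum_f_R0 (fun k => snd (f k)) N.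
Proof.
  induction N; [simpl; ring|].
  change (Csum (S (S N)) f) with (Cadd (Csum (S N) f) (f (S N))).
  rewrite tech5, <- IHN. reflexivity.
Qed.

Lemma Ccv_exp_cauchy_alternating (h : nat -> Cplx) c :
  (forall n, nrm (h n) <= c ^ n) ->
  Ccv (fun N => Csum (S N) (fun k => Csum (S N) (fun l =>
         Cmul (RtoC (exp_alt_weight k l)) (h (k + l)%nat)))) (h 0%nat).
Proof.
  intros Hh. split.
  - eapply Un_cv_ext; [|apply (exp_cauchy_alternating_cv (fun n => fst (h n)) c)].
    + intro N. cbv beta. rewrite fst_Csum. apply sum_eq. intros k _.
      rewrite fst_Csum. apply sum_eq. intros l _. unfold Cmul, RtoC; simpl. ring.
    + intro n. eapply Rle_trans; [|apply Hh]. unfold nrm.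
      pose proof (Rabs_pos (snd (h n))). lra.
  - eapply Un_cv_ext; [|apply (exp_cauchy_alternating_cv (fun n => snd (h n)) c)].
    + intro N. cbv beta. rewrite snd_Csum. apply sum_eq. intros k _.
      rewrite snd_Csum. apply sum_eq. intros l _. unfold Cmul, RtoC; simpl. ring.
    + intro n. eapply Rle_trans; [|apply Hh]. unfold nrm.
      pose proof (Rabs_pos (fst (h n))). lra.
Qed.

Lemma exp_partial_mul_opp_entry n A N i j : (j < n)%nat ->
  mmul n (exp_partial n A N) (exp_partial n (mopp A) N) i j =
  Csum (S N) (fun k => Csum (S N) (fun l =>
     Cmul (RtoC (exp_alt_weight k l)) (mpow n A (k + l) i j))).
Proof.
  intros Hj. unfold mmul at 1, exp_partial.
  rewrite (Csum_ext n _ (fun p => Csum (S N) (fun k => Csum (S N) (fun l =>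
     Cmul (RtoC (exp_alt_weight k l)) (Cmul (mpow n A k i p) (mpow n A l p j)))))).
  - rewrite Csum_swap. apply Csum_ext. intros k _. rewrite Csum_swap. apply Csum_ext. intros l _.
    rewrite Csum_mul_l, <- (mpow_add n A k l i j Hj). reflexivity.
  - intros p _. rewrite Csum_mul. apply Csum_ext. intros k _. apply Csum_ext. intros l _.
    rewrite mpow_opp. unfold mscal, exp_alt_weight. Cexpand.
Qed.

Lemma mexp_mul_opp n A E E' :
  is_mexp n A E -> is_mexp n (mopp A) E' -> meq n n (mmul n E E') mId.
Proof.
  intros HE HE' i j Hi Hj. destruct (mpow_geometric_bound n A) as [c Hc].
  apply (Ccv_unique (fun N => mmul n (exp_partial n A N) (exp_partial n (mopp A) N) i j)).
  - unfold mmul at 2. apply Ccv_Csum. intros k Hk.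
    apply Ccv_mul; [apply HE | apply HE']; auto.
  - eapply Ccv_ext; [intro N; symmetry; apply exp_partial_mul_opp_entry; auto|].
    apply (Ccv_exp_cauchy_alternating (fun k => mpow n A k i j) c). auto.
Qed.

(** * Reflection of the data *)

Lemma is_inv_opp n S Si Si' : is_inv n S Si -> is_inv n (mopp S) Si' -> meq n n Si' (mopp Si).
Proof.
  intros HS HS'.
  transitivity (mmul n Si' (mmul n (mopp S) (mopp Si))).
  - rewrite (mmul_oppl n S), (mmul_oppr n S), mopp_opp, (proj1 HS). symmetry; apply mmul_idr.
  - rewrite <- mmul_assoc, (proj2 HS'). apply mmul_idl.
Qed.

Lemma is_mexp_meq n A A' E : meq n n A A' -> is_mexp n A E -> is_mexp n A' E.
Proof.
  intros H HE i j Hi Hj.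
  assert (Hpow : forall k, meq n n (mpow n A k) (mpow n A' k)).
  { induction k; simpl; [reflexivity|]. rewrite IHk, H. reflexivity. }
  assert (Hpart : forall N, exp_partial n A N i j = exp_partial n A' N i j).
  { intro N. unfold exp_partial. apply Csum_ext. intros k _. unfold mscal.
    rewrite (Hpow k i j Hi Hj). reflexivity. }
  destruct (HE i j Hi Hj) as [H1 H2].
  split; (eapply Un_cv_ext; [|eassumption]); intro N; cbv beta; rewrite Hpart; reflexivity.
Qed.

Lemma is_Xi_opp_inv M Sm Sinv Sinv' x y Xi Xi' :
  is_inv M Sm Sinv -> is_inv M (mopp Sm) Sinv' ->
  is_Xi M Sm Sinv x y Xi -> is_Xi M (mopp Sm) Sinv' x y Xi' -> is_inv M Xi Xi'.
Proof.
  unfold is_Xi. intros HS HS' HX HX'.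
  set (A := msub (mopp (mscal (RtoC x) Sm)) (mscal (RtoC y) Sinv)) in HX.
  assert (HXopp : is_mexp M (mopp A) Xi').
  { eapply is_mexp_meq; [|exact HX']. rewrite (is_inv_opp M Sm Sinv Sinv' HS HS').
    intros i j _ _. unfold A, msub, madd, mopp, mscal. ring. }
  split; [exact (mexp_mul_opp M A Xi Xi' HX HXopp)|].
  apply (mexp_mul_opp M (mopp A)); [exact HXopp | rewrite mopp_opp; exact HX].
Qed.

Lemma is_W_opp M K X W : is_W M (mopp K) X W -> is_W M K X W.
Proof. unfold is_W. rewrite !mmul_oppl, mmul_oppr, mopp_opp. trivial. Qed.

Lemma mmul_inv_add_id n b P W Z :
  meq n n (mmul n (madd mId P) W) mId -> meq n b (mmul n P (mmul n W Z)) (msub Z (mmul n W Z)).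
Proof.
  intros H.
  transitivity (msub (mmul n (madd mId P) (mmul n W Z)) (mmul n mId (mmul n W Z))).
  - rewrite mmul_addl. intros i j _ _. unfold msub, madd, mopp. ring.
  - rewrite <- (mmul_assoc n n (madd mId P)), H, !mmul_idl. reflexivity.
Qed.

Section Reflection.

Variables (n : nat) (K Kinv Xi Xi' W W' : Mat).
Hypotheses (HK : is_inv n K Kinv) (HX : is_inv n Xi Xi')
  (HW : is_W n K Xi W) (HW' : is_W n Kinv Xi' W').

Lemma Xi_W_reflect : meq n n (mmul n Xi W) (mmul n Kinv (mmul n Xi' (mmul n W' Kinv))).
Proof.
  destruct HK as [HK1 HK2], HX as [HX1 HX2], HW as [_ HW2], HW' as [HW'1 _].
  set (D := madd Xi' (mmul n K (mmul n Xi K))).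
  set (A := madd mId (mmul n (mmul n K Xi) (mmul n K Xi))) in *.
  set (B := madd mId (mmul n (mmul n Kinv Xi') (mmul n Kinv Xi'))) in *.
  assert (HD1 : meq n n D (mmul n A Xi')).
  { unfold A. rewrite mmul_addl, !mmul_assoc, (mmul_inv_cancel_r n n Xi Xi' _ HX1), mmul_idl.
    reflexivity. }
  assert (HD2 : meq n n D (mmul n K (mmul n B (mmul n Xi K)))).
  { unfold B. rewrite mmul_addl, mmul_addr, !mmul_assoc, (mmul_inv_cancel_l n n K Kinv _ HK1),
      (mmul_inv_cancel_l n n Xi' Xi _ HX2), (mmul_inv_cancel_r n n Kinv K _ HK2), mmul_idl.
    unfold D. rewrite madd_comm. reflexivity. }
  assert (Hleft : meq n n (mmul n (mmul n Xi W) D) mId).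
  { rewrite HD1, !mmul_assoc, <- (mmul_assoc n n W A Xi'), HW2, mmul_idl. exact HX1. }
  assert (Hright : meq n n (mmul n D (mmul n Kinv (mmul n Xi' (mmul n W' Kinv)))) mId).
  { rewrite HD2, !mmul_assoc, (mmul_inv_cancel_l n n K Kinv _ HK1),
      (mmul_inv_cancel_l n n Xi Xi' _ HX1), <- (mmul_assoc n n B W' Kinv), HW'1, mmul_idl.
    exact HK1. }
  transitivity (mmul n (mmul n Xi W) (mmul n D (mmul n Kinv (mmul n Xi' (mmul n W' Kinv))))).
  - rewrite Hright. symmetry. apply mmul_idr.
  - rewrite <- mmul_assoc, Hleft. apply mmul_idl.
Qed.

Lemma XiKXi_W_reflect : meq n n (mmul n Xi (mmul n K (mmul n Xi W))) (mmul n W' Kinv).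
Proof.
  destruct HK as [HK1 HK2], HX as [HX1 HX2], HW as [_ HW2], HW' as [HW'1 _].
  set (E := madd K (mmul n Xi' (mmul n Kinv Xi'))).
  set (A := madd mId (mmul n (mmul n K Xi) (mmul n K Xi))) in *.
  set (B := madd mId (mmul n (mmul n Kinv Xi') (mmul n Kinv Xi'))) in *.
  assert (HE1 : meq n n E (mmul n A (mmul n Xi' (mmul n Kinv Xi')))).
  { unfold A. rewrite mmul_addl, !mmul_assoc, (mmul_inv_cancel_l n n Xi Xi' _ HX1),
      (mmul_inv_cancel_l n n K Kinv _ HK1), (mmul_inv_cancel_r n n Xi Xi' _ HX1), mmul_idl.
    unfold E. rewrite madd_comm. reflexivity. }
  assert (HE2 : meq n n E (mmul n K B)).
  { unfold B. rewrite mmul_addr, !mmul_assoc, (mmul_inv_cancel_l n n K Kinv _ HK1), mmul_idr.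
    reflexivity. }
  assert (Hleft : meq n n (mmul n (mmul n Xi (mmul n K (mmul n Xi W))) E) mId).
  { rewrite HE1, !mmul_assoc, <- (mmul_assoc n n W A), HW2, mmul_idl,
      (mmul_inv_cancel_l n n Xi Xi' _ HX1), (mmul_inv_cancel_l n n K Kinv _ HK1).
    exact HX1. }
  assert (Hright : meq n n (mmul n E (mmul n W' Kinv)) mId).
  { rewrite HE2, !mmul_assoc, <- (mmul_assoc n n B W' Kinv), HW'1, mmul_idl. exact HK1. }
  transitivity (mmul n (mmul n Xi (mmul n K (mmul n Xi W))) (mmul n E (mmul n W' Kinv))).
  - rewrite Hright. symmetry. apply mmul_idr.
  - rewrite <- (mmul_assoc n n _ E), Hleft. apply mmul_idl.
Qed.

Lemma q_of_reflect m U V :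
  meq m m (q_of n U V Xi W) (q_of n (mmul n U Kinv) (mmul n Kinv V) Xi' W').
Proof.
  unfold q_of. transitivity (mmul n U (mmul n (mmul n Xi W) V)).
  - rewrite !mmul_assoc. reflexivity.
  - rewrite Xi_W_reflect, !mmul_assoc. reflexivity.
Qed.

Lemma p_of_reflect m p0 U V :
  meq m m (p_of n p0 K U V Xi W)
          (p_of n (msub p0 (mmul n U (mmul n Kinv V))) (mopp Kinv)
                (mmul n U Kinv) (mmul n Kinv V) Xi' W').
Proof.
  unfold p_of.
  pose proof (mmul_inv_add_id n m _ W' (mmul n Kinv V) (proj1 HW')) as Hsq.
  rewrite !mmul_assoc in Hsq.
  transitivity (msub p0 (mmul n U (mmul n (mmul n Xi (mmul n K (mmul n Xi W))) V))).
  - rewrite !mmul_assoc. reflexivity.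
  - rewrite XiKXi_W_reflect, !mmul_assoc, mmul_oppl, !mmul_oppr, Hsq, mmul_subr.
    intros i j _ _. unfold msub, madd, mopp. ring.
Qed.

End Reflection.

Lemma sylvester_reflect m M Sm K Kinv U V :
  is_inv M K Kinv -> meq M M (madd (mmul M Sm K) (mmul M K Sm)) (mmul m V U) ->
  meq M M (madd (mmul M (mopp Sm) (mopp Kinv)) (mmul M (mopp Kinv) (mopp Sm)))
          (mmul m (mmul M Kinv V) (mmul M U Kinv)).
Proof.
  intros [HK1 HK2] Hsyl.
  rewrite !mmul_oppl, !mmul_oppr, !mopp_opp, mmul_assoc, <- (mmul_assoc M m V U Kinv), <- Hsyl,
    mmul_addl, mmul_addr, !mmul_assoc, (mmul_inv_cancel_r M M K Kinv _ HK1),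
    (mmul_inv_cancel_l M M Kinv K _ HK2), madd_comm.
  reflexivity.
Qed.

Theorem mainTheorem3 (m M : nat) (Sm Sinv K Kinv U V p0 : Mat)
  (HS : is_inv M Sm Sinv) (HK : is_inv M K Kinv)
  (Hsyl : meq M M (madd (mmul M Sm K) (mmul M K Sm)) (mmul m V U)) :
  let Sm' := mopp Sm in
  let K' := mopp Kinv in
  let V' := mmul M Kinv V in
  let U' := mmul M U Kinv in
  let p0' := msub p0 (mmul M U (mmul M Kinv V)) in
  meq M M (madd (mmul M Sm' K') (mmul M K' Sm')) (mmul m V' U') /\
  forall (x y : R) (Sinv' Xi Xi' W W' : Mat),
    is_inv M Sm' Sinv' ->
    is_Xi M Sm Sinv x y Xi -> is_W M K Xi W ->
    is_Xi M Sm' Sinv' x y Xi' -> is_W M K' Xi' W' ->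
    meq m m (q_of M U V Xi W) (q_of M U' V' Xi' W') /\
    meq m m (p_of M p0 K U V Xi W) (p_of M p0' K' U' V' Xi' W').
Proof.
  cbv zeta. split; [exact (sylvester_reflect m M Sm K Kinv U V HK Hsyl)|].
  intros x y Sinv' Xi Xi' W W' HS' HX HW HX' HW'.
  pose proof (is_Xi_opp_inv M Sm Sinv Sinv' x y Xi Xi' HS HS' HX HX') as HXi.
  pose proof (is_W_opp M Kinv Xi' W' HW') as HW'K.
  split; [apply (q_of_reflect M K) | apply (p_of_reflect M K)]; assumption.
Qed.
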